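(* Let $(\mathcal{A},\mu,\alpha)$ be a multiplicative Hom-alternative superalgebra. Define, for homogeneous $t,x,y,z$, $f(t,x,y,z)=\widetilde{as}(tx,\alpha(y),\alpha(z))-(-1)^{|t|(|x|+|y|+|z|)}\widetilde{as}(x,y,z)\alpha^{2}(t)-(-1)^{|t||x|}\alpha^{2}(x)\widetilde{as}(t,y,z)$, $F(t,x,y,z)=[\alpha^{2}(t),\widetilde{as}(x,y,z)]-(-1)^{|z|(|t|+|x|+|y|)}[\alpha^{2}(z),\widetilde{as}(t,x,y)]+(-1)^{(|t|+|x|)(|y|+|z|)}[\alpha^{2}(y),\widetilde{as}(z,t,x)]-(-1)^{|t|(|x|+|y|+|z|)}[\alpha^{2}(x),\widetilde{as}(y,z,t)]$. Then $F(t,x,y,z)=f(t,x,y,z)-(-1)^{|t|(|x|+|y|+|z|)}f(x,y,z,t)+(-1)^{(|t|+|x|)(|z|+|y|)}f(y,z,t,x)$.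
   Context: $\mathcal{A}=\mathcal{A}_0\oplus\mathcal{A}_1$ is a $\mathbb{Z}_2$-graded vector space over an algebraically closed field $\mathbb{K}$ of characteristic $0$; $|x|$ is the parity of homogeneous $x$; we write $\mu(x,y)=xy$, $\mu$ even bilinear, $\alpha$ even linear; $[a,b]=ab-(-1)^{|a||b|}ba$ is the super-commutator. $\widetilde{as}(x,y,z)=(xy)\alpha(z)-\alpha(x)(yz)$. A Hom-alternative superalgebra is a triple $(\mathcal{A},\mu,\alpha)$ with $\widetilde{as}(x,y,z)+(-1)^{|x||y|}\widetilde{as}(y,x,z)=0$ and $\widetilde{as}(x,y,z)+(-1)^{|y||z|}\widetilde{as}(x,z,y)=0$ for homogeneous $x,y,z$; multiplicative means $\alpha(xy)=\alpha(x)\alpha(y)$. *)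

From HB Require Import structures.
From mathcomp Require Import all_boot all_order all_algebra.
Set Implicit Arguments. Unset Strict Implicit. Unset Printing Implicit Defensive.
Import Order.TTheory GRing.Theory Num.Theory.
Local Open Scope ring_scope.

Section SuperDefs.
Variables (K : fieldType) (A : lmodType K).

Definition is_subspace (P : {pred A}) : Prop :=
  0 \in P /\ forall (a : K) (u v : A), u \in P -> v \in P -> a *: u + v \in P.

Definition is_Z2_grading (A0 A1 : {pred A}) : Prop :=
  [/\ is_subspace A0, is_subspace A1,
      (forall x : A, exists x0 x1, [/\ x0 \in A0, x1 \in A1 & x = x0 + x1])
    & (forall x : A, x \in A0 -> x \in A1 -> x = 0)].

(* x is homogeneous of parity p (false = even, true = odd) *)
Definition homog (A0 A1 : {pred A}) (p : bool) (x : A) : Prop :=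
  x \in (if p then A1 else A0).

Definition sgn (n : nat) : K := (-1) ^+ n.

Definition is_bilinear (mu : A -> A -> A) : Prop :=
  (forall (a : K) x y z, mu (a *: x + y) z = a *: mu x z + mu y z) /\
  (forall (a : K) x y z, mu z (a *: x + y) = a *: mu z x + mu z y).

Definition is_linear_map (f : A -> A) : Prop :=
  forall (a : K) x y, f (a *: x + y) = a *: f x + f y.

Definition even_bilinear (A0 A1 : {pred A}) (mu : A -> A -> A) : Prop :=
  forall p q x y, homog A0 A1 p x -> homog A0 A1 q y ->
    homog A0 A1 (p (+) q) (mu x y).

Definition even_map (A0 A1 : {pred A}) (f : A -> A) : Prop :=
  forall p x, homog A0 A1 p x -> homog A0 A1 p (f x).

Definition hom_as (mu : A -> A -> A) (alpha : A -> A) (x y z : A) : A :=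
  mu (mu x y) (alpha z) - mu (alpha x) (mu y z).

Definition scomm (mu : A -> A -> A) (pa pb : nat) (a b : A) : A :=
  mu a b - sgn (pa * pb) *: mu b a.

Definition is_hom_alternative_superalgebra (A0 A1 : {pred A})
    (mu : A -> A -> A) (alpha : A -> A) : Prop :=
  [/\ is_Z2_grading A0 A1, is_bilinear mu, even_bilinear A0 A1 mu,
      is_linear_map alpha & even_map A0 A1 alpha] /\
  ((forall (px py pz : bool) x y z,
         homog A0 A1 px x -> homog A0 A1 py y -> homog A0 A1 pz z ->
         hom_as mu alpha x y z + sgn (px * py) *: hom_as mu alpha y x z = 0) /\
   (forall (px py pz : bool) x y z,
         homog A0 A1 px x -> homog A0 A1 py y -> homog A0 A1 pz z ->
         hom_as mu alpha x y z + sgn (py * pz) *: hom_as mu alpha x z y = 0)).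

Definition hom_multiplicative (mu : A -> A -> A) (alpha : A -> A) : Prop :=
  forall x y, alpha (mu x y) = mu (alpha x) (alpha y).

Definition f_fun (mu : A -> A -> A) (alpha : A -> A)
    (pt px py pz : nat) (t x y z : A) : A :=
  hom_as mu alpha (mu t x) (alpha y) (alpha z)
  - sgn (pt * (px + py + pz)) *: mu (hom_as mu alpha x y z) (alpha (alpha t))
  - sgn (pt * px) *: mu (alpha (alpha x)) (hom_as mu alpha t y z).

Definition F_fun (mu : A -> A -> A) (alpha : A -> A)
    (pt px py pz : nat) (t x y z : A) : A :=
  scomm mu pt (px + py + pz) (alpha (alpha t)) (hom_as mu alpha x y z)
  - sgn (pz * (pt + px + py)) *:
      scomm mu pz (pt + px + py) (alpha (alpha z)) (hom_as mu alpha t x y)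
  + sgn ((pt + px) * (py + pz)) *:
      scomm mu py (pz + pt + px) (alpha (alpha y)) (hom_as mu alpha z t x)
  - sgn (pt * (px + py + pz)) *:
      scomm mu px (py + pz + pt) (alpha (alpha x)) (hom_as mu alpha y z t).

End SuperDefs.

(* Expand only f(t,x,y,z), by the Teichmuller identity
     as~(tx, alpha y, alpha z) = as~(alpha t, xy, alpha z) - as~(alpha t, alpha x, yz)
                                 + alpha^2(t) as~(x,y,z) + as~(t,x,y) alpha^2(z).
   Super skew-symmetry makes as~ invariant, up to the Koszul sign, under cyclic
   permutations of its arguments, so every associator on either side can be
   rotated to a fixed representative of its cyclic orbit; both sides are then
   the same Z-linear combination of these, for each of the 16 parity patterns. *)

From HB Require Import structures.
From mathcomp Require Import all_boot all_order all_algebra.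
Import GRing.Theory.
Set Implicit Arguments.
Unset Strict Implicit.
Unset Printing Implicit Defensive.
Local Open Scope ring_scope.

(* Elements of the free Z-module over a list of atoms, normalised to integer
   coefficient vectors: the tactic [abel] below decides identities in a
   zmodType by comparing these vectors. *)
Inductive zmod_expr :=
  | ZVar of nat | ZZero | ZAdd of zmod_expr & zmod_expr | ZOpp of zmod_expr.

Fixpoint coef_add (c1 c2 : seq int) : seq int :=
  match c1, c2 with
  | [::], c | c, [::] => c
  | k1 :: c1', k2 :: c2' => (k1 + k2) :: coef_add c1' c2'
  end.

Fixpoint zmod_coefs (e : zmod_expr) : seq int :=
  match e with
  | ZVar n => ncons n 0 [:: 1]
  | ZZero => [::]
  | ZAdd e1 e2 => coef_add (zmod_coefs e1) (zmod_coefs e2)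
  | ZOpp e1 => map -%R (zmod_coefs e1)
  end.

Section ZmodExprEval.
Variable V : zmodType.

Fixpoint zmod_eval (env : seq V) (e : zmod_expr) : V :=
  match e with
  | ZVar n => env`_n
  | ZZero => 0
  | ZAdd e1 e2 => zmod_eval env e1 + zmod_eval env e2
  | ZOpp e1 => - zmod_eval env e1
  end.

Fixpoint lincomb (env : seq V) (c : seq int) : V :=
  if c is k :: c' then head 0 env *~ k + lincomb (behead env) c' else 0.

Lemma lincomb_add env c1 c2 :
  lincomb env (coef_add c1 c2) = lincomb env c1 + lincomb env c2.
Proof.
elim: c1 c2 env => [|k1 c1 IH] [|k2 c2] env /=; rewrite ?add0r ?addr0 //.
by rewrite IH mulrzDr addrACA.
Qed.

Lemma lincomb_opp env c : lincomb env (map -%R c) = - lincomb env c.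
Proof. by elim: c env => [|k c IH] env /=; rewrite ?oppr0 // IH mulrNz opprD. Qed.

Lemma lincomb_var env n : lincomb env (ncons n 0 [:: 1]) = env`_n.
Proof.
elim: n env => [|n IH] [|v env] /=; rewrite ?mulr0z ?add0r ?addr0 ?IH ?nth_nil //.
Qed.

Lemma zmod_eval_lincomb env e : zmod_eval env e = lincomb env (zmod_coefs e).
Proof.
elim: e => [n||e1 IH1 e2 IH2|e1 IH] /=.
- by rewrite lincomb_var.
- by [].
- by rewrite lincomb_add IH1 IH2.
- by rewrite lincomb_opp IH.
Qed.

Lemma lincomb_eq0 env c : all (eq_op^~ 0) c -> lincomb env c = 0.
Proof.
by elim: c env => [|k c IH] env //= /andP[/eqP -> /IH ->]; rewrite mulr0z addr0.
Qed.

Lemma zmod_eval_eq env e1 e2 :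
  all (eq_op^~ 0) (zmod_coefs (ZAdd e1 (ZOpp e2))) ->
  zmod_eval env e1 = zmod_eval env e2.
Proof.
move=> /(lincomb_eq0 env); rewrite -zmod_eval_lincomb /= => /eqP.
by rewrite subr_eq0 => /eqP.
Qed.

End ZmodExprEval.

Ltac zmod_index x env :=
  match env with
  | x :: _ => constr:(0%N)
  | _ :: ?env' => let n := zmod_index x env' in constr:(n.+1)
  end.

Ltac zmod_atoms t acc :=
  match t with
  | (?a + ?b)%R => let acc := zmod_atoms a acc in zmod_atoms b acc
  | (- ?a)%R => zmod_atoms a acc
  | 0%R => acc
  | _ => match acc with context [t :: _] => acc | _ => constr:(t :: acc) end
  end.

Ltac zmod_reify t env :=
  match t with
  | (?a + ?b)%R =>
      let ea := zmod_reify a env in let eb := zmod_reify b env in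
      constr:(ZAdd ea eb)
  | (- ?a)%R => let ea := zmod_reify a env in constr:(ZOpp ea)
  | 0%R => constr:(ZZero)
  | _ => let n := zmod_index t env in constr:(ZVar n)
  end.

Ltac abel :=
  match goal with
  | |- ?l = ?r =>
    let T := type of l in
    let env := zmod_atoms l (@nil T) in
    let env := zmod_atoms r env in
    let el := zmod_reify l env in
    let er := zmod_reify r env in
    change (zmod_eval env el = zmod_eval env er);
    apply: zmod_eval_eq; vm_compute; reflexivity
  end.

Lemma sgn_odd (K : fieldType) (n : nat) : sgn K n = (-1) ^+ odd n.
Proof. by rewrite /sgn signr_odd. Qed.

Section BilinearProduct.
Variables (K : fieldType) (A : lmodType K) (mu : A -> A -> A).
Hypothesis mu_bilinear : is_bilinear mu.

Lemma muBl u v w : mu (u - v) w = mu u w - mu v w.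
Proof.
case: mu_bilinear => linl _.
by rewrite addrC -scaleN1r linl scaleN1r addrC.
Qed.

Lemma muBr u v w : mu w (u - v) = mu w u - mu w v.
Proof.
case: mu_bilinear => _ linr.
by rewrite addrC -scaleN1r linr scaleN1r addrC.
Qed.

Lemma muZl a u w : mu (a *: u) w = a *: mu u w.
Proof.
have mu0w : mu 0 w = 0 by rewrite -(subrr w) muBl !subrr.
by case: mu_bilinear => linl _; rewrite -[a *: u]addr0 linl mu0w addr0.
Qed.

Lemma muZr a u w : mu w (a *: u) = a *: mu w u.
Proof.
have muw0 : mu w 0 = 0 by rewrite -(subrr w) muBr !subrr.
by case: mu_bilinear => _ linr; rewrite -[a *: u]addr0 linr muw0 addr0.
Qed.

Lemma hom_teichmuller (alpha : A -> A) t x y z :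
  hom_multiplicative mu alpha ->
  hom_as mu alpha (mu t x) (alpha y) (alpha z) =
  hom_as mu alpha (alpha t) (mu x y) (alpha z)
  - hom_as mu alpha (alpha t) (alpha x) (mu y z)
  + mu (alpha (alpha t)) (hom_as mu alpha x y z)
  + mu (hom_as mu alpha t x y) (alpha (alpha z)).
Proof. by move=> alpha_mul; rewrite /hom_as !muBl !muBr !alpha_mul; abel. Qed.

End BilinearProduct.

Section HomAlternativeSuperalgebra.
Variables (K : fieldType) (A : lmodType K) (A0 A1 : {pred A}).
Variables (mu : A -> A -> A) (alpha : A -> A).
Hypothesis hA : is_hom_alternative_superalgebra A0 A1 mu alpha.

Local Notation homog := (homog A0 A1).

Lemma hom_as_rotate (pu pv pw : bool) u v w :
  homog pu u -> homog pv v -> homog pw w ->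
  hom_as mu alpha u v w = sgn K (pu * (pv + pw)) *: hom_as mu alpha v w u.
Proof.
case: hA => _ [skew12 skew23] hu hv hw.
have /eqP := skew12 _ _ _ _ _ _ hu hv hw; rewrite addr_eq0 => /eqP ->.
have /eqP := skew23 _ _ _ _ _ _ hv hu hw; rewrite addr_eq0 => /eqP ->.
by rewrite scalerN opprK scalerA /sgn mulnDr exprD mulrC.
Qed.

Lemma F_fun_decomposition (pt px py pz : bool) t x y z :
  hom_multiplicative mu alpha ->
  homog pt t -> homog px x -> homog py y -> homog pz z ->
  F_fun mu alpha pt px py pz t x y z =
  f_fun mu alpha pt px py pz t x y z
  - sgn K (pt * (px + py + pz)) *: f_fun mu alpha px py pz pt x y z t
  + sgn K ((pt + px) * (pz + py)) *: f_fun mu alpha py pz pt px y z t x.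
Proof.
move=> alpha_mul ht hx hy hz.
have [[_ mu_bilinear mu_even _ alpha_even] _] := hA.
have hat := alpha_even _ _ ht; have hax := alpha_even _ _ hx.
have haz := alpha_even _ _ hz.
have hxy := mu_even _ _ _ _ hx hy; have hyz := mu_even _ _ _ _ hy hz.
rewrite /F_fun /f_fun /scomm hom_teichmuller //.
rewrite (hom_as_rotate hy ht hx) (hom_as_rotate hx hz ht).
rewrite (hom_as_rotate ht hy hz) (hom_as_rotate hyz hat hax).
rewrite (hom_as_rotate hxy haz hat) (hom_as_rotate haz hat hxy).
rewrite !(muZl mu_bilinear, muZr mu_bilinear) !sgn_odd !(oddD, oddM, oddb).
clear; case: pt px py pz => [] [] [] [];
  by rewrite ?expr0 ?expr1 ?scale1r ?scaleN1r ?opprK; abel.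
Qed.

End HomAlternativeSuperalgebra.

Theorem mainTheorem15 (K : closedFieldType) (hK : [pchar K] =i pred0)
    (A : lmodType K) (A0 A1 : {pred A}) (mu : A -> A -> A) (alpha : A -> A)
    (hA : is_hom_alternative_superalgebra A0 A1 mu alpha)
    (hmult : hom_multiplicative mu alpha)
    (pt px py pz : bool) (t x y z : A)
    (ht : homog A0 A1 pt t) (hx : homog A0 A1 px x)
    (hy : homog A0 A1 py y) (hz : homog A0 A1 pz z) :
  F_fun mu alpha pt px py pz t x y z =
  f_fun mu alpha pt px py pz t x y z
  - sgn K (pt * (px + py + pz)) *: f_fun mu alpha px py pz pt x y z t
  + sgn K ((pt + px) * (pz + py)) *: f_fun mu alpha py pz pt px y z t x.
Proof. exact (F_fun_decomposition hA hmult ht hx hy hz). Qed.
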